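(* The set $X^{\mathcal B}=\{x^{\mathbf b}:\mathbf b\in\mathcal B\}$ is a basis of the $\mathbb C$-vector space $\mathcal W_0$.
   Context: Let $A=\{\mathbf a_1,\dots,\mathbf a_m\}\subseteq\mathbb Z^n$ be linearly independent over $\mathbb R$ and $\ell_1,\dots,\ell_m$ positive integers (part of a relation $\ell_0\mathbf a_0=\sum_j\ell_j\mathbf a_j$, $\ell_0=\sum_j\ell_j$, $\mathbf a_0\in\mathbb Z^n$, $\gcd(\ell_0,\dots,\ell_m)=1$). Let $f_0=\sum_{j=1}^m\ell_jx^{\mathbf a_j}$. Let $V$ be the real span of $A$, $V_{\mathbb Z}=V\cap\mathbb Z^n$, $C(A)$ the real cone generated by $A$, $M=V_{\mathbb Z}\cap C(A)$. Let $S_0$ be the $\mathbb C$-span of $\{x^u:u\in M\}$, $D_{i,0}=x_i\partial/\partial x_i+x_i\partial f_0/\partial x_i$ ($i=1,\dots,n$), and $\mathcal W_0=S_0/\sum_iD_{i,0}S_0$. Let $P(A)=\{\sum_jc_j\mathbf a_j:0\le c_j<1\}$ and $\mathcal B=V_{\mathbb Z}\cap P(A)$. *)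

From HB Require Import structures.
From mathcomp Require Import all_boot all_order all_algebra.
From mathcomp Require Import reals.
From mathcomp.real_closed Require Export complex.
Set Implicit Arguments. Unset Strict Implicit. Unset Printing Implicit Defensive.
Import Order.TTheory GRing.Theory Num.Theory.
Local Open Scope ring_scope.

Definition Zn (n : nat) := 'rV[int]_n.

(* A Laurent polynomial in x_1..x_n with coefficients in C is a finitely
   supported coefficient function Z^n -> C  (g <-> sum_u g u x^u). *)
Definition fin_supp (C : Type) (n : nat) (zero : C) (eqC : C -> C -> bool)
  (g : Zn n -> C) : Prop :=
  exists s : seq (Zn n), forall u, ~~ eqC (g u) zero -> u \in s.

Section Defs.
Variable R : realType.
Local Notation C := (complex R).
Variables (n m : nat) (a : 'I_m -> Zn n) (l : 'I_m -> nat).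

Definition toR (u : Zn n) : 'rV[R]_n := map_mx (fun z : int => z%:~R) u.

Definition lin_indep_R : bool := row_free (\matrix_(j < m) toR (a j)).

Definition rcomb (c : 'I_m -> R) : 'rV[R]_n := \sum_(j < m) c j *: toR (a j).

Definition in_VZ (u : Zn n) : Prop := exists c, toR u = rcomb c.
Definition in_cone (v : 'rV[R]_n) : Prop :=
  exists c, (forall j, 0 <= c j) /\ v = rcomb c.
Definition in_M (u : Zn n) : Prop := in_VZ u /\ in_cone (toR u).
Definition in_PA (v : 'rV[R]_n) : Prop :=
  exists c, (forall j, 0 <= c j < 1) /\ v = rcomb c.
Definition in_B (u : Zn n) : Prop := in_VZ u /\ in_PA (toR u).

Definition laurent := Zn n -> C.
Definition finsupp (g : laurent) : Prop := fin_supp 0 (fun x y => x == y) g.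

Definition monom (b : Zn n) : laurent := fun u => if u == b then 1 else 0.

Definition in_S0 (g : laurent) : Prop :=
  finsupp g /\ forall u, g u != 0 -> in_M u.

Definition mulmon (v : Zn n) (g : laurent) : laurent := fun u => g (u - v).
(* Euler operator x_i d/dx_i  (x_i d/dx_i x^u = u_i x^u) *)
Definition euler (i : 'I_n) (g : laurent) : laurent :=
  fun u => (u ord0 i)%:~R * g u.
(* x_i d f_0/d x_i = sum_j l_j (a_j)_i x^{a_j}, where f_0 = sum_j l_j x^{a_j} *)
(* D_{i,0} g = x_i dg/dx_i + (x_i df_0/dx_i) g *)
Definition D0 (i : 'I_n) (g : laurent) : laurent :=
  fun u => euler i g u +
    \sum_(j < m) ((l j)%:R * (a j ord0 i)%:~R) * mulmon (a j) g u.

Definition in_DS0 (h : laurent) : Prop :=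
  exists g : 'I_n -> laurent, (forall i, in_S0 (g i)) /\
    forall u, h u = \sum_(i < n) D0 i (g i) u.

Definition lincomb (s : seq (Zn n)) (c : Zn n -> C) : laurent :=
  fun u => \sum_(b <- s) c b * monom b u.

(* {x^b : b in B} is a basis of W_0 = S_0 / sum_i D_{i,0} S_0:
   the x^b lie in S_0, their classes span W_0, and they are linearly
   independent in W_0 (distinct b give linearly independent classes). *)
Definition XB_basis_of_W0 : Prop :=
  [/\ forall b, in_B b -> in_S0 (monom b),
      forall g, in_S0 g -> exists (s : seq (Zn n)) (c : Zn n -> C),
        (forall b, b \in s -> in_B b) /\ in_DS0 (fun u => g u - lincomb s c u)
    & forall (s : seq (Zn n)) (c : Zn n -> C), uniq s -> (forall b, b \in s -> in_B b) ->
        in_DS0 (lincomb s c) -> forall b, b \in s -> c b = 0].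
End Defs.

(* Write c(u) for the coordinates of u in V with respect to the basis A, and
   phi for a left inverse of the matrix of A.  The identity
     sum_i phi_(i,k) D_(i,0) x^v = c_k(v) x^v + l_k x^(v + a_k)
   rewrites x^(v + a_k) as a multiple of x^v modulo sum_i D_(i,0) S_0, so by
   descent on sum_k c_k(u) every x^u with u in M reduces to the x^b, b in B.
   For independence, each b in B gives the linear form h |-> sum_u h(u) K_b(u),
   where K_b(u) = prod_k rho_k(c_k(u)) if c(u) = c(b) modulo Z^m and 0
   otherwise, with rho_k(t + 1) = - t rho_k(t) / l_k and rho_k = 1 on [0, 1).
   This recursion makes the form vanish on every D_(i,0) S_0, while it maps
   x^b' to the Kronecker delta of b and b'. *)

From HB Require Import structures.
From mathcomp Require Import all_boot all_order all_algebra.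
From mathcomp Require Import reals.
From mathcomp.real_closed Require Import complex.
From mathcomp Require Import ring.
Set Implicit Arguments. Unset Strict Implicit. Unset Printing Implicit Defensive.
Import Order.TTheory GRing.Theory Num.Theory.
Local Open Scope ring_scope.
Local Open Scope complex_scope.

Section FiniteSupportSums.
Variable V : nmodType.

Lemma big_uniq_supp (I : eqType) (r s : seq I) (F : I -> V) :
  uniq r -> uniq s -> (forall i, F i != 0 -> i \in r) ->
  (forall i, F i != 0 -> i \in s) ->
  \sum_(i <- r) F i = \sum_(i <- s) F i.
Proof.
move=> ur us Fr Fs; apply: perm_big_supp; apply: uniq_perm; rewrite ?filter_uniq //.
by move=> i; rewrite !mem_filter; apply/andP/andP => -[Fi _]; split=> //;
  [exact: Fs | exact: Fr].
Qed.

Lemma big_uniq_shift (I : zmodType) (r s : seq I) (d : I) (F : I -> V) :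
  uniq r -> uniq s -> (forall i, F (i + d) != 0 -> i \in r) ->
  (forall i, i \in r -> i + d \in s) ->
  \sum_(i <- s) F i = \sum_(i <- r) F (i + d).
Proof.
move=> ur us Fr rs; rewrite (@big_uniq_supp _ s [seq i + d | i <- r]) ?big_map //.
- by rewrite map_inj_uniq //; exact: addIr.
- by move=> i; rewrite -(subrK d i) => /Fr /rs.
- by move=> i; rewrite -{1}(subrK d i) => /Fr ir; apply/mapP; exists (i - d); rewrite ?subrK.
Qed.

End FiniteSupportSums.

Lemma big_uniq_delta (I : eqType) (V : pzSemiRingType) (s : seq I) (F : I -> V) y :
  uniq s -> \sum_(x <- s) F x * (x == y)%:R = (y \in s)%:R * F y.
Proof.
move=> us; have [ys|yNs] := boolP (y \in s).
  rewrite (bigD1_seq y) //= eqxx mulr1 mul1r big1 ?addr0 // => x /negbTE ->.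
  by rewrite mulr0.
rewrite mul0r big1_seq // => x /= xs; suff /negbTE -> : x != y by rewrite mulr0.
by apply: contraNneq yNs => <-.
Qed.

Section Coordinates.
Variables (R : realType) (n m : nat) (a : 'I_m -> Zn n).
Hypothesis hA : lin_indep_R R a.
Implicit Types u v : Zn n.

Local Notation Amx := (\matrix_(j < m) toR R (a j)).

(* [coord u] are the coordinates of u in the basis A only when u lies in V. *)
Definition coordmx : 'M[R]_(n, m) := pinvmx Amx.
Definition coord u (j : 'I_m) : R := (toR R u *m coordmx) 0 j.

Lemma coordE u k : coord u k = \sum_i (u ord0 i)%:~R * coordmx i k.
Proof. by rewrite /coord mxE; apply: eq_bigr => i _; rewrite mxE. Qed.

Lemma toRD u v : toR R (u + v) = toR R u + toR R v.
Proof. exact: map_mxD. Qed.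

Lemma toRB u v : toR R (u - v) = toR R u - toR R v.
Proof. exact: map_mxB. Qed.

Lemma toR_inj : injective (@toR R n).
Proof. by move=> u v /rowP e; apply/rowP => i; have := e i; rewrite !mxE => /intr_inj. Qed.

Lemma rcombE (c : 'I_m -> R) : rcomb a c = \row_j c j *m Amx.
Proof. by rewrite mulmx_sum_row; apply: eq_bigr => j _; rewrite rowK mxE. Qed.

Lemma rcombD (c c' : 'I_m -> R) :
  rcomb a (fun j => c j + c' j) = rcomb a c + rcomb a c'.
Proof. by rewrite /rcomb -big_split; apply: eq_bigr => j _; rewrite scalerDl. Qed.

Lemma rcombB (c c' : 'I_m -> R) :
  rcomb a (fun j => c j - c' j) = rcomb a c - rcomb a c'.
Proof. by rewrite /rcomb -sumrB; apply: eq_bigr => j _; rewrite scalerBl. Qed.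

Lemma coord_rcomb u c : toR R u = rcomb a c -> forall j, coord u j = c j.
Proof.
move=> uc; have Afree : row_free Amx := hA.
have /rowP eq_row : \row_j coord u j = \row_j c j.
  apply: (row_free_inj Afree); rewrite -[RHS]rcombE -uc.
  have -> : \row_j coord u j = toR R u *m coordmx by apply/rowP => j; rewrite mxE.
  by rewrite mulmxKpV // uc rcombE submxMl.
by move=> j; have := eq_row j; rewrite !mxE.
Qed.

Lemma toR_a k : toR R (a k) = rcomb a (fun j => (j == k)%:R).
Proof.
rewrite /rcomb (bigD1 k) //= eqxx scale1r big1 ?addr0 // => j /negbTE ->.
by rewrite scale0r.
Qed.

Lemma coord_a k j : coord (a k) j = (j == k)%:R.
Proof. exact: coord_rcomb (toR_a k) j. Qed.

Lemma in_VZ_coord u : in_VZ R a u -> toR R u = rcomb a (coord u).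
Proof. by case=> c uc; rewrite uc /rcomb; apply: eq_bigr => j _; rewrite (coord_rcomb uc). Qed.

Lemma toR_addr_a v k : in_VZ R a v ->
  toR R (v + a k) = rcomb a (fun j => coord v j + (j == k)%:R).
Proof. by move=> vV; rewrite rcombD toRD -toR_a -in_VZ_coord. Qed.

Lemma toR_subr_a v k : in_VZ R a v ->
  toR R (v - a k) = rcomb a (fun j => coord v j - (j == k)%:R).
Proof. by move=> vV; rewrite rcombB toRB -toR_a -in_VZ_coord. Qed.

Lemma coord_addr_a v k : in_VZ R a v ->
  forall j, coord (v + a k) j = coord v j + (j == k)%:R.
Proof. by move=> vV; apply: coord_rcomb; exact: toR_addr_a. Qed.

Lemma sum_coord_subr_a v k : in_VZ R a v ->
  \sum_j coord (v - a k) j = \sum_j coord v j - 1.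
Proof.
move=> vV; rewrite (eq_bigr _ (fun j _ => coord_rcomb (toR_subr_a k vV) j)).
rewrite sumrB; congr (_ - _); rewrite (bigD1 k) //= eqxx big1 ?addr0 //.
by move=> j /negbTE ->.
Qed.

Lemma intr_coord v i : in_VZ R a v ->
  (v ord0 i)%:~R = \sum_j coord v j * (a j ord0 i)%:~R :> R.
Proof.
move=> vV; have /rowP/(_ i) := in_VZ_coord vV.
by rewrite /rcomb summxE !mxE => ->; apply: eq_bigr => j _; rewrite !mxE.
Qed.

Lemma coord_ge0 u : in_M R a u -> forall j, 0 <= coord u j.
Proof. by case=> _ [c [c_ge0 uc]] j; rewrite (coord_rcomb uc). Qed.

Lemma coord_B u : in_B R a u -> forall j, 0 <= coord u j < 1.
Proof. by case=> _ [c [c01 uc]] j; rewrite (coord_rcomb uc). Qed.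

Lemma in_M_B u : in_B R a u -> in_M R a u.
Proof.
case=> uV [c [c01 uc]]; split=> //; exists c; split=> // j.
by case/andP: (c01 j).
Qed.

Lemma in_B_M u : in_M R a u -> (forall j, coord u j < 1) -> in_B R a u.
Proof.
move=> uM lt1; have uV := uM.1; split=> //; exists (coord u).
by split; [move=> j; rewrite coord_ge0 ?lt1 | exact: in_VZ_coord].
Qed.

Lemma in_M_subr_a u k : in_M R a u -> 1 <= coord u k -> in_M R a (u - a k).
Proof.
move=> uM ge1; have uc := toR_subr_a k uM.1.
split; first by exists (fun j => coord u j - (j == k)%:R).
exists (fun j => coord u j - (j == k)%:R); split=> // j.
by have [->|_] := eqVneq j k; rewrite ?subr_ge0 ?subr0 ?coord_ge0.
Qed.

Lemma coord_inj_B u v : in_B R a u -> in_B R a v ->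
  (forall k, coord u k = coord v k) -> u = v.
Proof.
move=> [uV _] [vV _] e; apply: toR_inj.
by rewrite (in_VZ_coord uV) (in_VZ_coord vV) /rcomb; apply: eq_bigr => k _; rewrite e.
Qed.

End Coordinates.

Section Reduction.
Variables (R : realType) (n m : nat) (a : 'I_m -> Zn n) (l : 'I_m -> nat).
Local Notation C := (complex R).
Local Notation coord := (coord R a).
Local Notation coordmx := (coordmx R a).
Hypothesis hA : lin_indep_R R a.
Hypothesis hl : forall j, (0 < l j)%N.
Implicit Types (g h : laurent R n) (u v : Zn n).

Lemma monomE b u : monom R b u = (b == u)%:R.
Proof. by rewrite /monom eq_sym; case: eqP. Qed.

Lemma lincombE s (c : Zn n -> C) u : uniq s -> lincomb s c u = (u \in s)%:R * c u.
Proof. by move=> us; rewrite /lincomb -big_uniq_delta //; apply: eq_bigr => b _; rewrite monomE. Qed.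

Lemma finsupp0 : finsupp (fun _ : Zn n => 0 : C).
Proof. by exists [::] => u; rewrite eqxx. Qed.

Lemma finsuppD g g' : finsupp g -> finsupp g' -> finsupp (fun w => g w + g' w).
Proof.
move=> [s gs] [s' gs']; exists (s ++ s') => u; rewrite mem_cat.
by have [->|/gs -> //] := eqVneq (g u) 0; rewrite add0r => /gs' ->; rewrite orbT.
Qed.

Lemma finsuppZ (c : C) g : finsupp g -> finsupp (fun w => c * g w).
Proof. by move=> [s gs]; exists s => u cg; apply: gs; apply: contra cg => /eqP ->; rewrite mulr0. Qed.

Lemma finsupp_cover (I : finType) (g : I -> laurent R n) :
  (forall i, finsupp (g i)) -> exists T : seq (Zn n), forall i u, g i u != 0 -> u \in T.
Proof.
move=> gfin; suff [T gT] : exists T : seq (Zn n), forall i, i \in enum I -> forall u, g i u != 0 -> u \in T.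
  by exists T => i; apply: gT; rewrite mem_enum.
elim: (enum I) => [|i r [T gT]]; first by exists [::].
have [Ti gTi] := gfin i; exists (Ti ++ T) => j.
rewrite inE => /predU1P[-> | jr] u gu; rewrite mem_cat; first by rewrite gTi.
by rewrite (gT j jr u gu) orbT.
Qed.

Lemma S0D g g' : in_S0 a g -> in_S0 a g' -> in_S0 a (fun w => g w + g' w).
Proof.
move=> [gfin gM] [g'fin g'M]; split; first exact: finsuppD.
by move=> u; have [->|/gM //] := eqVneq (g u) 0; rewrite add0r => /g'M.
Qed.

Lemma S0Z (c : C) g : in_S0 a g -> in_S0 a (fun w => c * g w).
Proof.
move=> [gfin gM]; split; first exact: finsuppZ.
by move=> u cg; apply: gM; apply: contra cg => /eqP ->; rewrite mulr0.
Qed.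

Lemma S0_monom u : in_M R a u -> in_S0 a (monom R u).
Proof.
move=> uM; split=> [|w]; last by rewrite monomE pnatr_eq0 eqb0 negbK => /eqP <-.
by exists [:: u] => w; rewrite monomE pnatr_eq0 eqb0 negbK inE eq_sym.
Qed.

Lemma D0D i g g' u : D0 a l i (fun w => g w + g' w) u = D0 a l i g u + D0 a l i g' u.
Proof.
rewrite /D0 /euler /mulmon mulrDr addrACA -big_split /=; congr (_ + _).
by apply: eq_bigr => j _; rewrite mulrDr.
Qed.

Lemma D0Z i (c : C) g u : D0 a l i (fun w => c * g w) u = c * D0 a l i g u.
Proof.
rewrite /D0 /euler /mulmon mulrDr mulr_sumr mulrCA; congr (_ + _).
by apply: eq_bigr => j _; rewrite mulrCA.
Qed.

Lemma DS0_ext h h' : (forall u, h u = h' u) -> in_DS0 a l h -> in_DS0 a l h'.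
Proof. by move=> e [g [gS0 hg]]; exists g; split=> // u; rewrite -e. Qed.

Lemma DS0_0 : in_DS0 a l (fun _ => 0 : C).
Proof.
exists (fun _ _ => 0); split=> [i|u].
  by split=> [|u]; [exact: finsupp0 | rewrite eqxx].
rewrite big1 // => i _; rewrite /D0 /euler mulr0 add0r big1 // => j _.
by rewrite /mulmon mulr0.
Qed.

Lemma DS0D h h' : in_DS0 a l h -> in_DS0 a l h' -> in_DS0 a l (fun w => h w + h' w).
Proof.
move=> [g [gS0 hg]] [g' [g'S0 h'g']].
exists (fun i w => g i w + g' i w); split=> [i|u]; first exact: S0D.
by rewrite hg h'g' -big_split; apply: eq_bigr => i _; rewrite D0D.
Qed.

Lemma DS0Z (c : C) h : in_DS0 a l h -> in_DS0 a l (fun w => c * h w).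
Proof.
move=> [g [gS0 hg]]; exists (fun i w => c * g i w); split=> [i|u]; first exact: S0Z.
by rewrite hg mulr_sumr; apply: eq_bigr => i _; rewrite D0Z.
Qed.

Lemma coord_complex (w : Zn n) k :
  \sum_i (w ord0 i)%:~R * (coordmx i k)%:C = (coord w k)%:C :> C.
Proof.
rewrite coordE rmorph_sum; apply: eq_bigr => i _.
by rewrite rmorphM /= rmorph_int.
Qed.

Lemma DS0_monom_shift v k : in_M R a v ->
  in_DS0 a l (fun w => (coord v k)%:C * monom R v w + (l k)%:R * monom R (v + a k) w).
Proof.
move=> vM; exists (fun i w => (coordmx i k)%:C * monom R v w); split.
  by move=> i; apply/S0Z/S0_monom.
move=> u; rewrite big_split /=; congr (_ + _).
  rewrite /euler; under eq_bigr => i _ do rewrite mulrA.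
  rewrite -mulr_suml coord_complex !monomE.
  by have [->|_] := eqVneq v u; rewrite ?mulr0n ?mulr0.
have shift j : \sum_i (l j)%:R * (a j ord0 i)%:~R * mulmon (a j)
      (fun w => (coordmx i k)%:C * monom R v w) u
    = (l j)%:R * (j == k)%:R * monom R v (u - a j).
  transitivity ((l j)%:R * (\sum_i (a j ord0 i)%:~R * (coordmx i k)%:C)
                 * monom R v (u - a j)).
    by rewrite mulr_sumr mulr_suml; apply: eq_bigr => i _; rewrite /mulmon; ring.
  by rewrite coord_complex coord_a // eq_sym rmorph_nat.
rewrite exchange_big /= (eq_bigr _ (fun j _ => shift j)) (bigD1 k) //= eqxx mulr1.
rewrite big1 ?addr0 => [|j /negbTE ->]; last by rewrite mulr0 mul0r.
by rewrite !monomE [v == _]eq_sym subr_eq eq_sym.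
Qed.

Definition Bspan g := exists d : laurent R n, [/\ finsupp d,
  forall u, d u != 0 -> in_B R a u & in_DS0 a l (fun w => g w - d w)].

Lemma Bspan_ext g g' : (forall u, g u = g' u) -> Bspan g -> Bspan g'.
Proof.
move=> e [d [dfin dB dDS]]; exists d; split=> //.
by apply: DS0_ext dDS => u; rewrite e.
Qed.

Lemma Bspan_DS0 h : in_DS0 a l h -> Bspan h.
Proof.
move=> hDS; exists (fun _ => 0); split=> [||]; first exact: finsupp0.
  by move=> u; rewrite eqxx.
by apply: DS0_ext hDS => u; rewrite subr0.
Qed.

Lemma BspanD g g' : Bspan g -> Bspan g' -> Bspan (fun w => g w + g' w).
Proof.
move=> [d [dfin dB dDS]] [d' [d'fin d'B d'DS]].
exists (fun w => d w + d' w); split; first exact: finsuppD.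
  by move=> u; have [->|/dB //] := eqVneq (d u) 0; rewrite add0r => /d'B.
by apply: DS0_ext (DS0D dDS d'DS) => u; rewrite opprD addrACA.
Qed.

Lemma BspanZ (c : C) g : Bspan g -> Bspan (fun w => c * g w).
Proof.
move=> [d [dfin dB dDS]]; exists (fun w => c * d w); split; first exact: finsuppZ.
  by move=> u cd; apply: dB; apply: contra cd => /eqP ->; rewrite mulr0.
by apply: DS0_ext (DS0Z c dDS) => u; rewrite mulrBr.
Qed.

Lemma Bspan_B u : in_B R a u -> Bspan (monom R u).
Proof.
move=> uB; exists (monom R u); split; last by apply: DS0_ext DS0_0 => w; rewrite subrr.
  by case: (S0_monom (in_M_B uB)).
by move=> w; rewrite monomE pnatr_eq0 eqb0 negbK => /eqP <-.
Qed.

Lemma Bspan_lincomb g : Bspan g -> exists (s : seq (Zn n)) (c : Zn n -> C),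
  (forall b, b \in s -> in_B R a b) /\ in_DS0 a l (fun u => g u - lincomb s c u).
Proof.
move=> [d [[s ds] dB dDS]]; exists [seq u <- undup s | d u != 0], d; split.
  by move=> u; rewrite mem_filter => /andP[/dB].
apply: DS0_ext dDS => u; rewrite lincombE ?filter_uniq ?undup_uniq //.
rewrite mem_filter mem_undup; have [->|du] := eqVneq (d u) 0; first by rewrite mulr0.
by rewrite (ds _ du) mul1r.
Qed.

Lemma Bspan_monom_addr v k : in_M R a v -> Bspan (monom R v) -> Bspan (monom R (v + a k)).
Proof.
move=> vM vspan; have lk_neq0 : (l k)%:R != 0 :> C by rewrite pnatr_eq0 -lt0n hl.
pose rel w := (coord v k)%:C * monom R v w + (l k)%:R * monom R (v + a k) w.
apply: (@Bspan_ext (fun w => (l k)%:R^-1 * (rel w + - (coord v k)%:C * monom R v w))).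
  by move=> w; rewrite /rel mulNr addrAC subrr add0r mulKf.
by apply/BspanZ/BspanD; [exact/Bspan_DS0/DS0_monom_shift | exact: BspanZ].
Qed.

Lemma Bspan_monom_M u : in_M R a u -> Bspan (monom R u).
Proof.
have sum_ge0 w : in_M R a w -> 0 <= \sum_j coord w j.
  by move=> wM; apply: sumr_ge0 => j _; exact: (coord_ge0 hA).
move=> uM; move: (archi_boundP (sum_ge0 u uM)); move: (Num.Def.archi_bound _) => N.
elim: N u uM => [|N IH] u uM sum_lt.
  by have := sum_ge0 u uM; rewrite leNgt sum_lt.
have [/forallP lt1|] := boolP [forall k, coord u k < 1].
  exact/Bspan_B/in_B_M.
case/forallPn => k; rewrite -leNgt => ge1.
have vM := in_M_subr_a hA uM ge1.
rewrite -(subrK (a k) u); apply: Bspan_monom_addr => //; apply: IH => //.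
by rewrite sum_coord_subr_a ?ltrBlDr ?natr1 //; case: uM.
Qed.

Lemma Bspan_S0 g : in_S0 a g -> Bspan g.
Proof.
move=> [[s gs] gM].
apply: (@Bspan_ext (fun w => \sum_(u <- undup s) g u * monom R u w)).
  move=> w; rewrite (eq_bigr _ (fun u _ => congr1 _ (monomE u w))).
  rewrite big_uniq_delta ?undup_uniq // mem_undup.
  by have [->|/gs ->] := eqVneq (g w) 0; rewrite ?mulr0 ?mul1r.
elim: (undup s) => [|u r IH].
  by apply: (@Bspan_ext (fun _ => 0)) (Bspan_DS0 DS0_0) => w; rewrite big_nil.
apply: (@Bspan_ext (fun w => g u * monom R u w + \sum_(x <- r) g x * monom R x w)).
  by move=> w; rewrite big_cons.
apply: BspanD IH; have [->|/gM uM] := eqVneq (g u) 0.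
  by apply: (@Bspan_ext (fun _ => 0)) (Bspan_DS0 DS0_0) => w; rewrite mul0r.
exact/BspanZ/Bspan_monom_M.
Qed.

End Reduction.

Section GammaRatio.
Variable R : archiRealFieldType.
Implicit Types (c t : R).

Definition frac t : R := t - (Num.truncn t)%:R.

(* gamma_ratio c t = (-1/c)^[t] * Gamma(t) / Gamma(frac t) for t >= 0, the
   solution of f(t + 1) = - t f(t) / c normalised to 1 on [0, 1). *)
Definition gamma_ratio c t : R :=
  \prod_(i < Num.truncn t) (- (frac t + i%:R) / c).

Lemma truncn_addr1 t : 0 <= t -> Num.truncn (t + 1) = (Num.truncn t).+1.
Proof. by move=> t_ge0; rewrite addrC truncnD ?truncn1 // ?nnegrE. Qed.

Lemma truncn_small t : 0 <= t < 1 -> Num.truncn t = 0%N.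
Proof. by move=> /andP[_ t_lt1]; apply/truncn0Pn; rewrite -ltNge. Qed.

Lemma frac_addr1 t : 0 <= t -> frac (t + 1) = frac t.
Proof. by move=> t_ge0; rewrite /frac truncn_addr1 // -natr1 opprD addrACA subrr addr0. Qed.

Lemma frac_small t : 0 <= t < 1 -> frac t = t.
Proof. by move=> t01; rewrite /frac truncn_small // subr0. Qed.

Lemma gamma_ratio_addr1 c t : 0 <= t ->
  gamma_ratio c (t + 1) = gamma_ratio c t * (- t / c).
Proof.
move=> t_ge0; rewrite /gamma_ratio frac_addr1 // truncn_addr1 // big_ord_recr /=.
by rewrite /frac subrK.
Qed.

Lemma gamma_ratio_small c t : 0 <= t < 1 -> gamma_ratio c t = 1.
Proof. by move=> t01; rewrite /gamma_ratio truncn_small // big_ord0. Qed.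

End GammaRatio.

Section Independence.
Variables (R : realType) (n m : nat) (a : 'I_m -> Zn n) (l : 'I_m -> nat).
Hypothesis hA : lin_indep_R R a.
Hypothesis hl : forall j, (0 < l j)%N.
Local Notation C := (complex R).
Local Notation coord := (coord R a).
Implicit Types (g : laurent R n) (u v : Zn n).

Section DualWeight.
Variable b : Zn n.

Definition dual_weight u : R :=
  if [forall k, frac (coord u k) == coord b k]
  then \prod_k gamma_ratio (l k)%:R (coord u k) else 0.

Lemma dual_weight_addr v j : in_M R a v ->
  dual_weight (v + a j) = dual_weight v * (- coord v j / (l j)%:R).
Proof.
move=> vM; have vc := coord_addr_a hA j vM.1; have v_ge0 := coord_ge0 hA vM.
rewrite /dual_weight.
have -> : [forall k, frac (coord (v + a j) k) == coord b k]
        = [forall k, frac (coord v k) == coord b k].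
  apply: eq_forallb => k; rewrite vc.
  by have [->|_] := eqVneq k j; rewrite ?frac_addr1 ?addr0.
case: ifP => _; last by rewrite mul0r.
rewrite (bigD1 j) //= [in RHS](bigD1 j) //= vc eqxx gamma_ratio_addr1 // mulrAC.
by congr (_ * _ * _); apply: eq_bigr => k /negbTE kj; rewrite vc kj addr0.
Qed.

Lemma dual_weight_B u : in_B R a u -> in_B R a b -> dual_weight u = (u == b)%:R.
Proof.
move=> uB bB; rewrite /dual_weight; have [->|ub] := eqVneq u b.
  rewrite ifT; last by apply/forallP => k; rewrite frac_small ?(coord_B hA bB).
  by rewrite big1 // => k _; rewrite gamma_ratio_small ?(coord_B hA bB).
case: ifP => // /forallP frac_eq; case/eqP: ub; apply: (coord_inj_B hA uB bB) => k.
by have /eqP <- := frac_eq k; rewrite frac_small ?(coord_B hA uB).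
Qed.

(* Since c(v + a_j) = c(v) + e_j, the recursion of gamma_ratio turns the
   shifted terms of D_{i,0} into -c_j(v), and sum_j c_j(v) (a_j)_i = v_i. *)
Lemma dual_weight_annihilated v i : in_M R a v ->
  (v ord0 i)%:~R * (dual_weight v)%:C
  + \sum_j ((l j)%:R * (a j ord0 i)%:~R) * (dual_weight (v + a j))%:C = 0 :> C.
Proof.
move=> vM.
have annihilated : (v ord0 i)%:~R * dual_weight v
    + \sum_j ((l j)%:R * (a j ord0 i)%:~R) * dual_weight (v + a j) = 0.
  rewrite (intr_coord hA i vM.1) mulr_suml -big_split big1 //= => j _.
  have lj_neq0 : (l j)%:R != 0 :> R by rewrite pnatr_eq0 -lt0n hl.
  by rewrite dual_weight_addr //; field.
rewrite -[RHS](rmorph0 (real_complex R)) -annihilated.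
rewrite rmorphD rmorph_sum rmorphM rmorph_int; congr (_ + _).
by apply: eq_bigr => j _; rewrite !rmorphM rmorph_nat rmorph_int.
Qed.

Lemma sum_D0_dual_weight i g (T T' : seq (Zn n)) : in_S0 a g -> uniq T -> uniq T' ->
  (forall u, g u != 0 -> u \in T) -> {subset T <= T'} ->
  (forall u j, u \in T -> u + a j \in T') ->
  \sum_(u <- T') D0 a l i g u * (dual_weight u)%:C = 0.
Proof.
move=> [_ gM] uT uT' gT TT' shiftT.
have shift j : \sum_(u <- T') (l j)%:R * (a j ord0 i)%:~R * g (u - a j) * (dual_weight u)%:C
    = \sum_(v <- T) (l j)%:R * (a j ord0 i)%:~R * g v * (dual_weight (v + a j))%:C.
  rewrite (big_uniq_shift uT uT' _ (shiftT^~ j)); first by apply: eq_bigr => v _; rewrite addrK.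
  by move=> v; rewrite addrK => Fv; apply: gT; apply: contra Fv => /eqP ->; rewrite mulr0 mul0r.
rewrite /D0 /euler /mulmon; under eq_bigr => u _ do rewrite mulrDl mulr_suml.
rewrite big_split /= exchange_big (eq_bigr _ (fun j _ => shift j)) /=.
rewrite -(big_uniq_supp uT uT'); first last.
- by move=> u Fu; apply/TT'/gT; apply: contra Fu => /eqP ->; rewrite mulr0 mul0r.
- by move=> u Fu; apply: gT; apply: contra Fu => /eqP ->; rewrite mulr0 mul0r.
rewrite exchange_big -big_split big1 //= => v _.
have [->|gv] := eqVneq (g v) 0.
  by rewrite mulr0 mul0r add0r big1 // => j _; rewrite mulr0 mul0r.
rewrite -[RHS](mulr0 (g v)) -[X in _ = _ * X](dual_weight_annihilated i (gM v gv)).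
rewrite mulrDr mulr_sumr.
by congr (_ + _); [|apply: eq_bigr => j _]; ring.
Qed.

End DualWeight.

Lemma sum_lincomb_dual_weight s (c : Zn n -> C) b (T : seq (Zn n)) :
  uniq s -> uniq T -> (forall u, u \in s -> in_B R a u) -> b \in s -> {subset s <= T} ->
  \sum_(u <- T) lincomb s c u * (dual_weight b u)%:C = c b.
Proof.
move=> us uT sB bs sT.
have supp u : lincomb s c u * (dual_weight b u)%:C != 0 -> u \in s.
  by rewrite lincombE //; apply: contraR => /negbTE ->; rewrite !mul0r.
rewrite (big_uniq_supp uT us (fun u Fu => sT u (supp u Fu)) supp).
rewrite (eq_big_seq (fun u => c u * (u == b)%:R)) ?big_uniq_delta // ?bs ?mul1r //.
by move=> u su; rewrite lincombE // su mul1r (dual_weight_B (sB _ su) (sB _ bs)) rmorph_nat.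
Qed.

Lemma lincomb_DS0_coef0 s (c : Zn n -> C) : uniq s -> (forall b, b \in s -> in_B R a b) ->
  in_DS0 a l (lincomb s c) -> forall b, b \in s -> c b = 0.
Proof.
move=> us sB [g [gS0 lin_eq]] b bs.
have [T0 gT0] := finsupp_cover (g := g) (fun i => (gS0 i).1).
pose T := undup (s ++ T0).
pose T' := undup (T ++ flatten [seq [seq v + a j | v <- T] | j <- enum 'I_m]).
have TT' : {subset T <= T'} by move=> u uT; rewrite mem_undup mem_cat uT.
have sT' : {subset s <= T'} by move=> u su; rewrite TT' // mem_undup mem_cat su.
have shiftT u j : u \in T -> u + a j \in T'.
  move=> uT; rewrite mem_undup mem_cat; apply/orP; right; apply/flattenP.
  by exists [seq v + a j | v <- T]; [apply/mapP; exists j; rewrite ?mem_enum | exact: map_f].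
rewrite -(sum_lincomb_dual_weight c us (undup_uniq _) sB bs sT').
under eq_bigr => u _ do rewrite lin_eq mulr_suml.
rewrite exchange_big big1 // => i _.
apply: (sum_D0_dual_weight (T := T) (T' := T') b i (gS0 i) (undup_uniq _) (undup_uniq _)) => // u gu.
by rewrite mem_undup mem_cat (gT0 i u gu) orbT.
Qed.

End Independence.

Theorem proposition3p9 (R : realType) (n m : nat) (a : 'I_m -> Zn n)
    (a0 : Zn n) (l : 'I_m -> nat) (l0 : nat)
    (hA : lin_indep_R R a)
    (hl : forall j, (0 < l j)%N)
    (hl0 : l0 = (\sum_(j < m) l j)%N)
    (hrel : a0 *+ l0 = \sum_(j < m) a j *+ l j)
    (hgcd : gcdn l0 (\big[gcdn/0%N]_(j < m) l j) = 1%N) :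
  XB_basis_of_W0 R a l.
Proof.
split.
- by move=> b /in_M_B /S0_monom.
- by move=> g /(Bspan_S0 hA hl) /Bspan_lincomb.
- exact: lincomb_DS0_coef0.
Qed.
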